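(* If $\mathbf{Z}$ has a rotationally invariant distribution supported on the unit sphere, then Assumption (β) holds with $\beta=1$, i.e. $\max_{\mathbf{w}:\theta(\mathbf{w},\mathbf{w}_* )\le\phi}\lambda_{\max}(\mathbf{A}_{\mathbf{w},-\mathbf{w}_*})\le\phi$ for all $0\le\phi\le\pi/2$.
   Context: $\mathbf{Z}\in\mathbb{R}^p$ is a random vector, $\mathbf{w}_*\neq\mathbf{0}$ fixed, $\theta(\mathbf{u},\mathbf{v})\in[0,\pi]$ the angle between vectors, and $\mathbf{A}_{\mathbf{w},-\mathbf{w}_*}=\mathbb{E}[\mathbf{Z}\mathbf{Z}^\top\mathbb{I}\{\mathbf{w}^\top\mathbf{Z}\ge0,\mathbf{w}_*^\top\mathbf{Z}\le0\}]$. Assumption (β) with constant $\beta$: for all $0\le\phi\le\pi/2$, $\max_{\mathbf{w}:\theta(\mathbf{w},\mathbf{w}_* )\le\phi}\lambda_{\max}(\mathbf{A}_{\mathbf{w},-\mathbf{w}_*})\le\beta\phi$. *)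

From HB Require Import structures.
From mathcomp Require Import all_boot all_order all_algebra.
From mathcomp Require Import all_classical all_reals all_analysis.
Set Implicit Arguments. Unset Strict Implicit. Unset Printing Implicit Defensive.
Import Order.TTheory GRing.Theory Num.Theory.
Import numFieldNormedType.Exports.
Local Open Scope classical_set_scope.
Local Open Scope ring_scope.

Definition dotv {R : realType} {p : nat} (u v : 'rV[R]_p) : R :=
  \sum_(i < p) u 0 i * v 0 i.

Definition vnorm {R : realType} {p : nat} (u : 'rV[R]_p) : R := Num.sqrt (dotv u u).

Definition vangle {R : realType} {p : nat} (u v : 'rV[R]_p) : R :=
  acos (dotv u v / (vnorm u * vnorm v)).

(* Q is an orthogonal p x p matrix (a rotation in the broad sense) *)
Definition orthogonal_mx {R : realType} {p : nat} (Q : 'M[R]_p) : Prop :=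
  Q *m Q^T = 1%:M.

(* The law of Z is rotationally invariant: Z Q has the same distribution as Z
   for every orthogonal Q, i.e. both laws agree on every Borel set of R^p
   (the sigma-algebra generated by the open sets). *)
Definition rot_invariant {R : realType} {d : measure_display} {T : measurableType d}
  (P : probability T R) {p : nat} (Z : T -> 'rV[R]_p) : Prop :=
  forall Q : 'M[R]_p, orthogonal_mx Q ->
  forall B : set 'rV[R]_p, <<s open >> B ->
    P (Z @^-1` B) = P ((fun x => Z x *m Q) @^-1` B).

(* A_{w,-w*} = E[ Z Z^T 1{w^T Z >= 0, w*^T Z <= 0} ] *)
Definition Amat {R : realType} {d : measure_display} {T : measurableType d}
  (P : probability T R) {p : nat} (Z : T -> 'rV[R]_p) (w ws : 'rV[R]_p) : 'M[R]_p :=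
  \matrix_(i < p, j < p)
    fine (\int[P]_x ((Z x 0 i * Z x 0 j *
            ((0 <= dotv w (Z x)) && (dotv ws (Z x) <= 0))%:R)%:E))%E.

From HB Require Import structures.
From mathcomp Require Import all_boot all_order all_algebra.
From mathcomp Require Import all_classical all_reals all_analysis.
From mathcomp Require Import ring lra.
Import Order.TTheory GRing.Theory Num.Theory.
Import numFieldNormedType.Exports measurable_realfun.
Local Open Scope classical_set_scope.
Local Open Scope ring_scope.

(* Since Z is almost surely a unit vector, v^T A v = E[(v.Z)^2 1_S(Z)] <= |v|^2 P(Z \in S)
   for the sector S = {z | w.z >= 0, w*.z <= 0}, so every eigenvalue of A is at most
   P(Z \in S).  By rotation invariance this probability only depends on the angle t
   between w and w*: rotating by multiples of t in the plane of w and w* tiles a sector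
   of angle k t by k copies of S that overlap only on hyperplanes, hence
   k P(Z \in S) <= 1 whenever k t < pi, which forces P(Z \in S) <= t.  Hyperplanes are
   null sets: they all have the same probability, and a unit vector is orthogonal to
   fewer than p points of the moment curve s |-> (1, s, ..., s^(p-1)). *)

Lemma le0_of_natmul_bounded {R : archiRealFieldType} (x c : R) :
  (forall n : nat, x *+ n <= c) -> x <= 0.
Proof.
move=> xnc; rewrite leNgt; apply/negP => x0.
have c0 : 0 <= c by have := xnc 0%N; rewrite mulr0n.
have /andP[_] := truncn_itv (divr_ge0 c0 (ltW x0)).
by rewrite ltr_pdivrMr // mulr_natl ltNge xnc.
Qed.

Section DotProduct.
Context {R : realType} {p : nat}.
Implicit Types (u v w z : 'rV[R]_p).

Lemma dotvC u v : dotv u v = dotv v u.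
Proof. by apply: eq_bigr => i _; rewrite mulrC. Qed.

Lemma dotvDl u v w : dotv (u + v) w = dotv u w + dotv v w.
Proof. by rewrite /dotv -big_split; apply: eq_bigr => i _; rewrite !mxE mulrDl. Qed.

Lemma dotvDr u v w : dotv w (u + v) = dotv w u + dotv w v.
Proof. by rewrite dotvC dotvDl !(dotvC w). Qed.

Lemma dotvBl u v w : dotv (u - v) w = dotv u w - dotv v w.
Proof. by rewrite /dotv -sumrB; apply: eq_bigr => i _; rewrite !mxE mulrBl. Qed.

Lemma dotvBr u v w : dotv w (u - v) = dotv w u - dotv w v.
Proof. by rewrite dotvC dotvBl !(dotvC w). Qed.

Lemma dotvZl (k : R) u v : dotv (k *: u) v = k * dotv u v.
Proof. by rewrite /dotv mulr_sumr; apply: eq_bigr => i _; rewrite !mxE mulrA. Qed.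

Lemma dotvZr (k : R) u v : dotv v (k *: u) = k * dotv v u.
Proof. by rewrite dotvC dotvZl dotvC. Qed.

Lemma dotv0l u : dotv 0 u = 0.
Proof. by rewrite -(scale0r 0) dotvZl mul0r. Qed.

Lemma dotvNl u v : dotv (- u) v = - dotv u v.
Proof. by rewrite -scaleN1r dotvZl mulN1r. Qed.

Lemma dotvNr u v : dotv v (- u) = - dotv v u.
Proof. by rewrite dotvC dotvNl dotvC. Qed.

Lemma dotv_ge0 u : 0 <= dotv u u.
Proof. by apply: sumr_ge0 => i _; rewrite -expr2 sqr_ge0. Qed.

Lemma dotv_eq0 u : (dotv u u == 0) = (u == 0).
Proof.
apply/idP/eqP => [|->]; last by rewrite dotv0l.
rewrite psumr_eq0 => [/allP u0|i _]; last by rewrite -expr2 sqr_ge0.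
apply/rowP => i; rewrite mxE; apply/eqP.
by move: (u0 i (mem_index_enum i)); rewrite mulf_eq0 orbb.
Qed.

Lemma dotv_gt0 u : (0 < dotv u u) = (u != 0).
Proof. by rewrite lt_def dotv_eq0 dotv_ge0 andbT. Qed.

Lemma mulmx_trE u v : u *m v^T = (dotv u v)%:M.
Proof.
apply/matrixP => i j; rewrite !mxE !ord1 eqxx mulr1n.
by apply: eq_bigr => k _; rewrite !mxE.
Qed.

Lemma dotv_mulmx u v (M : 'M[R]_p) : dotv u (v *m M) = dotv (u *m M^T) v.
Proof.
have dotvE (a b : 'rV[R]_p) : dotv a b = (a *m b^T) 0 0 by rewrite mulmx_trE mxE mulr1n.
by rewrite !dotvE trmx_mul mulmxA.
Qed.

Lemma dotv_cauchy_schwarz u v : dotv u v ^+ 2 <= dotv u u * dotv v v.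
Proof.
have [->|u0] := eqVneq u 0; first by rewrite !dotv0l expr0n mul0r.
have uu0 : 0 < dotv u u by rewrite dotv_gt0.
have := dotv_ge0 (v - (dotv u v / dotv u u) *: u).
rewrite !(dotvBl, dotvBr, dotvZl, dotvZr) (dotvC v u).
set k := dotv u v / dotv u u.
have -> : dotv v v - k * dotv u v - k * (dotv u v - k * dotv u u) =
    dotv v v - dotv u v ^+ 2 / dotv u u by rewrite /k; field; rewrite gt_eqF.
by rewrite subr_ge0 ler_pdivrMr // mulrC.
Qed.

Lemma sqr_vnorm u : vnorm u ^+ 2 = dotv u u.
Proof. exact/sqr_sqrtr/dotv_ge0. Qed.

Lemma vnorm_gt0 u : (0 < vnorm u) = (u != 0).
Proof. by rewrite sqrtr_gt0 dotv_gt0. Qed.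

Definition unitv u := (vnorm u)^-1 *: u.

Lemma dotv_unitv u : u != 0 -> dotv (unitv u) (unitv u) = 1.
Proof.
rewrite -vnorm_gt0 => nu; rewrite dotvZl dotvZr -sqr_vnorm.
by field; rewrite gt_eqF.
Qed.

Lemma vangle_unitv u v : u != 0 -> v != 0 ->
  vangle u v = acos (dotv (unitv u) (unitv v)).
Proof.
rewrite -!vnorm_gt0 => nu nv; rewrite /vangle dotvZl dotvZr.
by congr acos; field; rewrite !gt_eqF.
Qed.

Lemma sqr_dotv_sub_proj u v t : dotv u u = 1 -> dotv v v = 1 -> dotv u v = cos t ->
  dotv (v - cos t *: u) (v - cos t *: u) = sin t ^+ 2.
Proof.
move=> uu vv uv; rewrite !(dotvBl, dotvBr, dotvZl, dotvZr) (dotvC v u) uu vv uv.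
transitivity (1 - cos t ^+ 2); first by ring.
by rewrite -(cos2Dsin2 t) addrAC subrr add0r.
Qed.

Lemma norm_coord_le1 z i : dotv z z = 1 -> `|z 0 i| <= 1.
Proof.
move=> z1; rewrite -(expr_le1 (n := 2)) // real_normK ?num_real // -z1.
rewrite /dotv (bigD1 i) //= expr2 lerDl sumr_ge0 // => j _.
by rewrite -expr2 sqr_ge0.
Qed.

Lemma dotv_unit_itv u v :
  dotv u u = 1 -> dotv v v = 1 -> -1 <= dotv u v <= 1.
Proof.
move=> u1 v1; have := dotv_cauchy_schwarz u v; rewrite u1 v1 mulr1 => uv_sqr.
by apply/andP; split; nra.
Qed.

Lemma vangle_def u v : u != 0 -> v != 0 ->
  0 <= vangle u v <= pi /\ cos (vangle u v) = dotv (unitv u) (unitv v).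
Proof.
by move=> u0 v0; rewrite vangle_unitv //; apply/acos_def/dotv_unit_itv; exact: dotv_unitv.
Qed.

End DotProduct.

Section PlaneRotation.
Context {R : realType} {p : nat}.
Implicit Types (a b u v : 'rV[R]_p).

Lemma dotv_delta_mxl i v : dotv (delta_mx 0 i) v = v 0 i.
Proof.
rewrite /dotv (bigD1 i) //= big1 => [|k /negPf ki]; last by rewrite mxE ki andbF mul0r.
by rewrite mxE !eqxx mul1r addr0.
Qed.

Lemma orthogonal_mx_dotv (Q : 'M[R]_p) :
  (forall u v, dotv (u *m Q) (v *m Q) = dotv u v) -> orthogonal_mx Q.
Proof.
move=> dotvQ; apply/matrixP => i j.
have := dotvQ (delta_mx 0 i) (delta_mx 0 j).
rewrite -!rowE dotv_delta_mxl !mxE eqxx /= => <-.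
by apply: eq_bigr => k _; rewrite !mxE.
Qed.

(* For an orthonormal pair (a, b) and c^2 + s^2 = 1: the rotation of angle (c, s) in the
   plane spanned by a and b, which fixes the orthogonal complement of that plane. *)
Definition rotmx a b (c s : R) : 'M[R]_p :=
  1%:M + (c - 1) *: (a^T *m a + b^T *m b) + s *: (a^T *m b - b^T *m a).

Lemma rotmxE a b c s u : u *m rotmx a b c s =
  u + (c - 1) *: (dotv u a *: a + dotv u b *: b) + s *: (dotv u a *: b - dotv u b *: a).
Proof.
rewrite /rotmx !mulmxDr mulmx1 -!scalemxAr !mulmxDr mulmxN !mulmxA !mulmx_trE.
by rewrite !mul_scalar_mx.
Qed.

Section OrthonormalPair.
Variables a b : 'rV[R]_p.
Hypotheses (a1 : dotv a a = 1) (b1 : dotv b b = 1) (ab0 : dotv a b = 0).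

Lemma rotmx_orthogonal c s : c ^+ 2 + s ^+ 2 = 1 -> orthogonal_mx (rotmx a b c s).
Proof.
move=> cs1; apply: orthogonal_mx_dotv => u v; rewrite !rotmxE.
rewrite !(dotvDl, dotvDr, dotvNl, dotvNr, dotvZl, dotvZr) a1 b1 ab0 (dotvC b a) ab0.
rewrite (dotvC a v) (dotvC b v).
move: (dotv u a) (dotv u b) (dotv v a) (dotv v b) => ua ub va vb.
transitivity (dotv u v + (ua * va + ub * vb) * (c ^+ 2 + s ^+ 2 - 1)); first by ring.
by rewrite cs1 subrr mulr0 addr0.
Qed.

Definition arcv (t : R) := cos t *: a + sin t *: b.

Lemma arcv0 : arcv 0 = a.
Proof. by rewrite /arcv cos0 sin0 scale1r scale0r addr0. Qed.

Lemma dotv_arcv t : dotv (arcv t) (arcv t) = 1.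
Proof.
rewrite !(dotvDl, dotvDr, dotvZl, dotvZr) a1 b1 ab0 (dotvC b a) ab0.
by rewrite !mulr0 !addr0 add0r !mulr1 -!expr2 cos2Dsin2.
Qed.

Lemma arcv_rotmx x t : arcv x *m rotmx a b (cos t) (sin t) = arcv (x + t).
Proof.
rewrite rotmxE !(dotvDl, dotvZl) a1 b1 ab0 (dotvC b a) ab0 /arcv cosD sinD.
by apply/rowP => j; rewrite !mxE; ring.
Qed.

Lemma arcv_between x t : sin (x + t) *: arcv x = sin t *: arcv 0 + sin x *: arcv (x + t).
Proof.
rewrite /arcv cos0 sin0 sinD cosD; apply/rowP => j; rewrite !mxE.
transitivity (sin t * (cos x ^+ 2 + sin x ^+ 2) * a 0 j
  + sin x * (sin x * cos t + cos x * sin t) * b 0 j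
  + sin x * (cos x * cos t - sin x * sin t) * a 0 j); first by ring.
by rewrite cos2Dsin2; ring.
Qed.

End OrthonormalPair.

Lemma unit_completion a v t : dotv a a = 1 -> dotv v v = 1 -> dotv a v = cos t ->
  sin t != 0 -> exists b, [/\ dotv b b = 1, dotv a b = 0 & v = arcv a b t].
Proof.
move=> a1 v1 av st0; exists ((sin t)^-1 *: (v - cos t *: a)); split.
- by rewrite dotvZl dotvZr sqr_dotv_sub_proj //; field.
- by rewrite dotvZr dotvBr dotvZr a1 av mulr1 subrr mulr0.
- by rewrite /arcv scalerA mulfV // scale1r addrC subrK.
Qed.

Lemma unit_collinear a v t : dotv a a = 1 -> dotv v v = 1 -> dotv a v = cos t ->
  sin t = 0 -> v = cos t *: a.
Proof.
move=> a1 v1 av st0; apply/eqP; rewrite -subr_eq0 -dotv_eq0.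
by rewrite sqr_dotv_sub_proj // st0 expr0n.
Qed.

Lemma unit_rotation_or_collinear u e : dotv u u = 1 -> dotv e e = 1 ->
  (exists Q : 'M[R]_p, orthogonal_mx Q /\ u *m Q = e) \/
  (exists c : R, c != 0 /\ e = c *: u).
Proof.
move=> u1 e1; set t := acos (dotv u e).
have [_ cost] := acos_def (dotv_unit_itv u e u1 e1); rewrite -/t in cost.
have [st0|st0] := eqVneq (sin t) 0.
  right; exists (cos t); split; last exact: unit_collinear.
  apply/eqP => ct0; have := cos2Dsin2 t.
  by rewrite ct0 st0 expr0n addr0 => /eqP; rewrite eq_sym oner_eq0.
have [b [b1 ub0 ->]] := unit_completion u e t u1 e1 (esym cost) st0.
left; exists (rotmx u b (cos t) (sin t)); split; first exact/rotmx_orthogonal/cos2Dsin2.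
by rewrite -{1}(arcv0 u b) arcv_rotmx // add0r.
Qed.

End PlaneRotation.

Section MomentCurve.
Context {R : realType} {p : nat}.

Definition moment_vec (s : R) : 'rV[R]_p := \row_(i < p) s ^+ i.

Definition coord_poly (z : 'rV[R]_p) : {poly R} :=
  \poly_(i < p) odflt 0 (omap (fun j : 'I_p => z 0 j) (insub i)).

Lemma dotv_moment_vec s z : dotv (moment_vec s) z = (coord_poly z).[s].
Proof.
rewrite /coord_poly horner_poly; apply: eq_bigr => i _.
by rewrite mxE valK /= mulrC.
Qed.

Lemma coord_poly_eq0 z : coord_poly z = 0 -> z = 0.
Proof.
move=> z0; apply/rowP => j; rewrite mxE.
have := coef_poly p (fun i => odflt 0 (omap (fun j : 'I_p => z 0 j) (insub i))) j.
by rewrite -/(coord_poly z) z0 coef0 ltn_ord valK.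
Qed.

Lemma moment_vec_neq0 s : (0 < p)%N -> moment_vec s != 0.
Proof.
move=> p0; apply/eqP => /rowP /(_ (Ordinal p0)); rewrite !mxE expr0 => /eqP.
by rewrite oner_eq0.
Qed.

Lemma count_orthogonal_moment_vec z (s : seq R) : z != 0 -> uniq s ->
  (count (fun t => dotv (moment_vec t) z == 0%R) s < p)%N.
Proof.
move=> z0 us; have cz0 : coord_poly z != 0 by apply: contra_neq z0; exact: coord_poly_eq0.
rewrite -size_filter; apply: leq_trans (max_poly_roots cz0 _ _) (size_poly _ _).
  by apply/allP => t; rewrite mem_filter dotv_moment_vec => /andP[].
exact: filter_uniq.
Qed.

End MomentCurve.

Section Sectors.
Context {R : realType} {p : nat}.
Implicit Types (u v : 'rV[R]_p).

Definition sector u v := [set z : 'rV[R]_p | 0 <= dotv u z /\ dotv v z <= 0].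

Definition hyperplane u := [set z : 'rV[R]_p | dotv u z = 0].

Lemma sector_diag u : sector u u = hyperplane u.
Proof.
apply/seteqP; split => z; rewrite /sector /hyperplane /=; last by move=> ->.
by case=> uz0 uz1; apply/eqP; rewrite eq_le uz0 uz1.
Qed.

Lemma sectorZ (k l : R) u v : 0 < k -> 0 < l -> sector (k *: u) (l *: v) = sector u v.
Proof.
by move=> k0 l0; apply/funext => z; rewrite /sector /= !dotvZl pmulr_rge0 // pmulr_rle0.
Qed.

Lemma hyperplaneZ (c : R) u : c != 0 -> hyperplane (c *: u) = hyperplane u.
Proof.
move=> c0; apply/funext => z; rewrite /hyperplane /= dotvZl.
by apply/propext; split => [/eqP|->]; rewrite ?mulr0 // mulf_eq0 (negPf c0) => /eqP.
Qed.

Lemma preimage_sector_mulmx (Q : 'M[R]_p) u v :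
  (fun z => z *m Q) @^-1` sector u v = sector (u *m Q^T) (v *m Q^T).
Proof. by apply/seteqP; split => z; rewrite /sector /= !dotv_mulmx. Qed.

Lemma continuous_dotv u : continuous (fun z : 'rV[R]_p => dotv u z).
Proof.
have -> : (fun z => dotv u z) = \sum_(i < p) (fun z : 'rV[R]_p => u 0 i * z 0 i).
  by apply/funext => z; rewrite fct_sumE.
apply: (big_ind (fun f : 'rV[R]_p -> R => continuous f)) => [|f g fc gc z|i _ z].
- exact: cst_continuous.
- exact: continuousD (fc z) (gc z).
- apply: (@continuousM R _ (fun=> u 0 i) (fun z : 'rV[R]_p => z 0 i)).
    exact: cst_continuous.
  exact: coord_continuous.
Qed.

Lemma closed_sector u v : closed (sector u v).
Proof.
apply: (@closedI _ (dotv u @^-1` [set x | 0 <= x]) (dotv v @^-1` [set x | x <= 0])).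
- exact: closed_comp (fun z _ => continuous_dotv u z) (@closed_ge _ 0).
- exact: closed_comp (fun z _ => continuous_dotv v z) (@closed_le _ 0).
Qed.

Lemma borel_sector u v : <<s open >> (sector u v).
Proof.
rewrite -[sector u v]setCK; apply: sigma_algebraC; apply: sub_sigma_algebra.
exact/closed_openC/closed_sector.
Qed.

End Sectors.

Section RintegralSum.
Context {R : realType} {d : measure_display} {T : measurableType d}.
Variables (mu : measure T R) (D : set T).
Hypothesis mD : measurable D.
Variables (I : Type) (s : seq I) (g : I -> T -> R).
Hypothesis ig : forall k, mu.-integrable D (EFin \o g k).

Lemma integrable_sumr : mu.-integrable D (EFin \o (fun x => \sum_(k <- s) g k x)).
Proof.
have -> : EFin \o (fun x => \sum_(k <- s) g k x) = fun x => (\sum_(k <- s) (g k x)%:E)%E.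
  by apply/funext => x; rewrite /= sumEFin.
exact: (integrable_sum mD s (h := fun k x => (g k x)%:E) (fun k _ => ig k)).
Qed.

Lemma Rintegral_sum :
  \int[mu]_(x in D) (\sum_(k <- s) g k x) = \sum_(k <- s) \int[mu]_(x in D) g k x.
Proof.
rewrite /Rintegral sum_fine => [|k _]; last exact: (integrable_fin_num mD (ig k)).
rewrite -integral_sum //.
by congr fine; apply: eq_integral => x _; rewrite sumEFin.
Qed.

End RintegralSum.

Section Probability.
Context {R : realType} {d : measure_display} {T : measurableType d}.
Variable P : probability T R.

Definition pr (A : set T) : R := fine (P A).

Lemma measure_pr A : measurable A -> P A = (pr A)%:E.
Proof. by move=> mA; rewrite /pr fineK // fin_num_measure. Qed.

Lemma pr_ge0 A : 0 <= pr A.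
Proof. exact/fine_ge0/measure_ge0. Qed.

Lemma pr_le1 A : measurable A -> pr A <= 1.
Proof. by move=> mA; rewrite -lee_fin -measure_pr // probability_le1. Qed.

Lemma le_pr A B : measurable A -> measurable B -> A `<=` B -> pr A <= pr B.
Proof. by move=> mA mB AB; rewrite -lee_fin -!measure_pr // le_measure // inE. Qed.

Lemma pr_setU_setI A B : measurable A -> measurable B ->
  pr A + pr B = pr (A `|` B) + pr (A `&` B).
Proof.
move=> mA mB; have mAB := measurableI _ _ mA mB.
apply: EFin_inj; rewrite !EFinD -!measure_pr //; last exact: measurableU.
rewrite measureUfinl // ?subeK ?fin_num_measure //.
by rewrite ltey_eq fin_num_measure.
Qed.

Lemma pr_add_le A B C : measurable A -> measurable B -> measurable C ->
  A `|` B `<=` C -> pr (A `&` B) = 0 -> pr A + pr B <= pr C.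
Proof.
move=> mA mB mC ABC AB0; rewrite pr_setU_setI // AB0 addr0.
exact: le_pr (measurableU _ _ mA mB) mC ABC.
Qed.

End Probability.

Section RotationInvariance.
Context {R : realType} {d : measure_display} {T : measurableType d}.
Context {P : probability T R} {p : nat} {Z : T -> 'rV[R]_p}.
Hypothesis Zmeas : forall i : 'I_p, measurable_fun setT (fun x => Z x 0 i).
Hypothesis Zrot : rot_invariant P Z.

Lemma measurable_dotv u : measurable_fun setT (fun x => dotv u (Z x)).
Proof.
apply: measurable_sum => i.
exact: measurable_funM (measurable_cst _) (Zmeas i).
Qed.

Lemma measurable_sector u v : measurable (Z @^-1` sector u v).
Proof.
have -> : Z @^-1` sector u v = (setT `&` [set x | 0 <= dotv u (Z x)])
    `&` (setT `&` [set x | dotv v (Z x) <= 0]).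
  by apply/seteqP; split => x /=; [case|case=> [[_ ?] [_ ?]]].
apply: measurableI; apply: measurable_fun_le => //;
  solve [exact: measurable_cst | exact: measurable_dotv].
Qed.

Lemma measurable_hyperplane u : measurable (Z @^-1` hyperplane u).
Proof. by rewrite -sector_diag; exact: measurable_sector. Qed.

Lemma pr_sector_mulmx (Q : 'M[R]_p) u v : orthogonal_mx Q ->
  pr P (Z @^-1` sector (u *m Q) (v *m Q)) = pr P (Z @^-1` sector u v).
Proof.
move=> oQ; rewrite /pr (Zrot Q oQ _ (borel_sector _ _)); do 2 apply: congr1.
change (Z @^-1` ((fun z => z *m Q) @^-1` sector (u *m Q) (v *m Q)) = Z @^-1` sector u v).
by rewrite preimage_sector_mulmx -!mulmxA oQ !mulmx1.
Qed.

Lemma pr_hyperplane_unit u e : dotv u u = 1 -> dotv e e = 1 ->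
  pr P (Z @^-1` hyperplane u) = pr P (Z @^-1` hyperplane e).
Proof.
move=> u1 e1; case: (unit_rotation_or_collinear u e u1 e1) => [[Q [oQ <-]]|[c [c0 ->]]].
  by rewrite -!sector_diag pr_sector_mulmx.
by rewrite hyperplaneZ.
Qed.

Context {G : set T}.
Hypotheses (mG : measurable G) (PG : P (~` G) = 0).
Hypothesis ZG : forall x, G x -> dotv (Z x) (Z x) = 1.

Lemma measure_setIG A : measurable A -> P A = P (A `&` G).
Proof.
move=> mA; rewrite (measureDI P mA mG) [X in (X + _)%E](_ : _ = 0%E) ?add0e //.
apply/eqP; rewrite eq_le measure_ge0 andbT -PG le_measure ?inE //.
- exact: measurableD.
- exact: measurableC.
Qed.

Lemma sum_pr_le_count (A : nat -> set T) (N K : nat) :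
  (forall k, measurable (A k)) ->
  (forall x, G x -> (count (fun k => x \in A k) (index_iota 0 N) <= K)%N) ->
  \sum_(0 <= k < N) pr P (A k) <= K%:R.
Proof.
move=> mA countK; rewrite -lee_fin -sumEFin.
have mind k : measurable_fun G (fun x => (\1_(A k) x : R)%:E).
  apply/measurable_EFinP.
  exact: measurable_funS measurableT _ (measurable_indic (mA k)).
under eq_bigr => k _ do rewrite -measure_pr // measure_setIG // -integral_indic //.
rewrite -ge0_integral_sum //.
apply: (@le_trans _ _ (\int[P]_(x in G) (K%:R)%:E)%E).
  apply: ge0_le_integral => //.
  - by move=> x _; rewrite sumEFin lee_fin sumr_ge0 // => k _; rewrite indicE.
  - exact: emeasurable_sum.
  move=> x Gx; rewrite sumEFin lee_fin.
  have -> : \sum_(k <- index_iota 0 N) \1_(A k) x =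
      (count (fun k => x \in A k) (index_iota 0 N))%:R :> R.
    by elim: (index_iota 0 N) => [|k s IH]; rewrite ?big_nil // big_cons IH indicE natrD.
  by rewrite ler_nat countK.
rewrite integral_cst // [X in (_ * X)%E](measure_pr _ _ mG) -EFinM lee_fin.
by rewrite ler_piMr // pr_le1.
Qed.

Lemma pr_hyperplane_eq0 u : dotv u u = 1 -> pr P (Z @^-1` hyperplane u) = 0.
Proof.
move=> u1; have p0 : (0 < p)%N.
  by case: p u u1 => [u|//]; rewrite /dotv big_ord0 => /eqP; rewrite eq_sym oner_eq0.
set m := pr P (Z @^-1` hyperplane u).
have pr_moment s : pr P (Z @^-1` hyperplane (moment_vec s)) = m.
  have ms0 := moment_vec_neq0 s p0.
  have nms0 : 0 < vnorm (moment_vec s : 'rV[R]_p) by rewrite vnorm_gt0.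
  rewrite -(hyperplaneZ _ _ (invr_neq0 (lt0r_neq0 nms0))).
  by apply: pr_hyperplane_unit => //; exact: dotv_unitv.
apply/le_anti; rewrite pr_ge0 andbT; apply: (le0_of_natmul_bounded _ p%:R) => N.
have -> : m *+ N = \sum_(0 <= k < N) pr P (Z @^-1` hyperplane (moment_vec k.+1%:R)).
  by rewrite (eq_bigr (fun=> m)) ?sumr_const_nat ?subn0 // => k _; exact: pr_moment.
apply: sum_pr_le_count => [k|x Gx]; first exact: measurable_hyperplane.
have Zx0 : Z x != 0 by rewrite -dotv_gt0 ZG // ltr01.
rewrite (eq_count (a2 := preim (fun k : nat => k.+1%:R)
    (fun t => dotv (moment_vec t) (Z x) == 0))) => [|k]; last first.
  by apply/idP/idP => [/set_mem/eqP|/eqP/mem_set].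
rewrite -count_map; apply/ltnW/count_orthogonal_moment_vec => //.
rewrite map_inj_uniq ?iota_uniq // => i j /eqP.
by rewrite eqr_nat eqSS => /eqP.
Qed.

Local Notation prS u v := (pr P (Z @^-1` sector u v)).

Section ArcSectors.
Variables a e : 'rV[R]_p.
Hypotheses (a1 : dotv a a = 1) (e1 : dotv e e = 1) (ae0 : dotv a e = 0).
Local Notation arc := (arcv a e).

Lemma pr_sector_arc_shift x t : prS (arc x) (arc (x + t)) = prS a (arc t).
Proof.
have oR : orthogonal_mx (rotmx a e (cos x) (sin x)) by exact/rotmx_orthogonal/cos2Dsin2.
rewrite -(pr_sector_mulmx _ a _ oR) arcv_rotmx // addrC.
by rewrite -[X in _ = prS (X *m _) _](arcv0 a e) arcv_rotmx // add0r.
Qed.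

Lemma pr_sector_arc_add x t : 0 < x -> 0 < t -> x + t < pi ->
  prS a (arc x) + prS a (arc t) <= prS a (arc (x + t)).
Proof.
move=> x0 t0 xtpi; have pi_gt0 := pi_gt0 R.
have [sx0 st0 sxt0] : [/\ 0 < sin x, 0 < sin t & 0 < sin (x + t)].
  by split; apply: sin_gt0_pi; apply/andP; split; lra.
rewrite -(pr_sector_arc_shift x t); apply: pr_add_le; try exact: measurable_sector.
  move=> z; have := congr1 (dotv^~ (Z z)) (arcv_between a e x t).
  rewrite arcv0 /= dotvDl !dotvZl /sector /= => between.
  by case=> -[az0 az1]; split; nra.
have hyp0 := pr_hyperplane_eq0 _ (dotv_arcv a e a1 e1 ae0 x).
apply/le_anti; rewrite pr_ge0 andbT -hyp0.
apply: le_pr; [by apply: measurableI; exact: measurable_sector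
              | exact: measurable_hyperplane |].
by move=> z [[_ xz0] [xz1 _]]; apply/eqP; rewrite eq_le xz0 xz1.
Qed.

Lemma pr_sector_arc_natmul k t : 0 < t -> k%:R * t < pi ->
  prS a (arc t) *+ k <= prS a (arc (k%:R * t)).
Proof.
move=> t0; elim: k => [|k IH] kt; first by rewrite mulr0n pr_ge0.
have [->|k0] := posnP k; first by rewrite mul1r mulr1n.
have k1t : k.+1%:R * t = k%:R * t + t by rewrite -addn1 natrD mulrDl mul1r.
have ktpi : k%:R * t < pi by apply: le_lt_trans kt; rewrite ler_pM2r // ler_nat.
rewrite mulrSr k1t; apply: le_trans (pr_sector_arc_add _ _ _ t0 _).
- by rewrite lerD2r IH.
- by rewrite mulr_gt0 // ltr0n.
- by rewrite -k1t.
Qed.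

Lemma pr_sector_arc_le t : 0 < t < 1 -> prS a (arc t) <= t.
Proof.
move=> /andP[t0 t1]; set n := (Num.truncn t^-1).+1.
(* n = floor(1/t) + 1 satisfies 1 < n t < 2 <= pi *)
have /andP[ntV Vnt] : (n.-1%:R <= t^-1 < n%:R)%R.
  by apply: truncn_itv; rewrite invr_ge0 ltW.
have Vtt : t^-1 * t = 1 by rewrite mulVf // lt0r_neq0.
have nt1 : 1 < n%:R * t by rewrite -[X in X < _]Vtt ltr_pM2r.
have ntpi : n%:R * t < pi.
  apply: lt_le_trans (pi_ge2 R); rewrite /n -addn1 natrD mulrDl mul1r.
  by rewrite -[2]/(1 + 1) ler_ltD // -[X in _ <= X]Vtt ler_pM2r.
have := pr_sector_arc_natmul n t t0 ntpi.
have := pr_le1 P _ (measurable_sector a (arc (n%:R * t))).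
rewrite -mulr_natl; nra.
Qed.

End ArcSectors.

Lemma pr_sector_le_angle a b t : dotv a a = 1 -> dotv b b = 1 -> dotv a b = cos t ->
  0 <= t <= pi -> prS a b <= t.
Proof.
move=> a1 b1 ab /andP[t0 tpi].
have [t1|t1] := leP 1 t; first by apply: le_trans t1; exact/pr_le1/measurable_sector.
have [st0|st0] := eqVneq (sin t) 0.
  have ct0 : 0 < cos t by apply: cos_gt0_pihalf; have := pi_ge2 R; lra.
  rewrite (unit_collinear a b t) // -[X in sector X _]scale1r sectorZ // sector_diag.
  by rewrite (pr_hyperplane_eq0 _ a1).
have [e [e1 ae0 ->]] := unit_completion a b t a1 b1 ab st0.
apply: pr_sector_arc_le => //; rewrite t1 andbT lt_def t0 andbT.
by apply: contraNneq st0 => ->; rewrite sin0.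
Qed.

Lemma integral_setT_G (f : T -> R) : measurable_fun setT f ->
  (\int[P]_x (f x)%:E = \int[P]_(x in G) (f x)%:E)%E.
Proof.
move=> mf; rewrite -(setUCr G) integral_setU //; last 3 first.
- exact: measurableC.
- by apply/measurable_EFinP; rewrite setUCr.
- exact/disj_setPCl.
rewrite [X in (_ + X)%E]null_set_integral ?adde0 //; first exact: measurableC.
exact/measurable_EFinP/(measurable_funS measurableT).
Qed.

Lemma integrable_bounded (B : R) (f : T -> R) : measurable_fun setT f ->
  (forall x, G x -> `|f x| <= B) -> P.-integrable G (EFin \o f).
Proof.
move=> mf fB; apply: measurable_bounded_integrable => //.
- by rewrite [X in (X < _)%E](measure_pr _ _ mG) ltry.
- exact: measurable_funS measurableT _ mf.
- exists B; split; first exact: num_real.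
  by move=> M BM x Gx; apply: le_trans (fB x Gx) (ltW BM).
Qed.

Lemma Rintegral_indicG (A : set T) : measurable A -> \int[P]_(x in G) \1_A x = pr P A.
Proof. by move=> mA; rewrite /Rintegral integral_indic // /pr (measure_setIG _ mA). Qed.

Section SectorMatrix.
Variables w ws : 'rV[R]_p.
Local Notation S := (Z @^-1` sector w ws).

Lemma indic_sectorE x :
  ((0 <= dotv w (Z x)) && (dotv ws (Z x) <= 0))%:R = \1_S x :> R.
Proof.
rewrite indicE; congr (nat_of_bool _)%:R.
by apply/idP/idP => [/andP[wz wsz]|/set_mem[-> ->] //]; exact/mem_set.
Qed.

Let f (i j : 'I_p) x := Z x 0 i * Z x 0 j * \1_S x.

Let mf i j : measurable_fun setT (f i j).
Proof.
apply: measurable_funM; first exact: measurable_funM.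
exact/measurable_indic/measurable_sector.
Qed.

Let indic_ge0 x : 0 <= \1_S x :> R.
Proof. by rewrite indicE. Qed.

Let indic_le1 x : \1_S x <= 1 :> R.
Proof. by rewrite indicE lern1 leq_b1. Qed.

Let f_le1 i j x : G x -> `|f i j x| <= 1.
Proof.
move=> Gx; rewrite /f !normrM [`|\1_S x|]ger0_norm //.
by apply: mulr_ile1; rewrite ?mulr_ge0 // mulr_ile1 ?norm_coord_le1 ?ZG.
Qed.

Let integrable_f i j : P.-integrable G (EFin \o f i j).
Proof. exact: integrable_bounded (mf i j) (f_le1 i j). Qed.

Let integrable_scaled_f (c : R) i j : P.-integrable G (EFin \o (fun x => c * f i j x)).
Proof.
apply: (integrable_bounded `|c|); first exact: measurable_funM.
by move=> x Gx; rewrite normrM ler_piMr // f_le1.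
Qed.

Lemma Amat_RintegralE i j : Amat P Z w ws i j = \int[P]_(x in G) f i j x.
Proof.
rewrite mxE; under eq_integral => x _ do rewrite indic_sectorE.
by rewrite /Rintegral integral_setT_G //; exact: mf.
Qed.

Lemma dotv_mulmx_Amat v :
  dotv (v *m Amat P Z w ws) v = \int[P]_(x in G) (dotv v (Z x) ^+ 2 * \1_S x).
Proof.
have -> : dotv (v *m Amat P Z w ws) v =
    \int[P]_(x in G) (\sum_j \sum_i v 0 i * v 0 j * f i j x).
  rewrite Rintegral_sum // => [|j]; last first.
    by apply: integrable_sumr => // i; exact: integrable_scaled_f.
  apply: eq_bigr => j _; rewrite Rintegral_sum // mxE mulr_suml.
  apply: eq_bigr => i _; rewrite (RintegralZl _ mG (integrable_f i j)).
  transitivity (v 0 i * v 0 j * Amat P Z w ws i j); first by ring.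
  by rewrite Amat_RintegralE.
apply: eq_Rintegral => x _; rewrite expr2 -mulrA mulr_suml; apply: eq_bigr => j _.
rewrite mulr_suml mulr_sumr; apply: eq_bigr => i _.
by rewrite /f; ring.
Qed.

Lemma Rintegral_sqr_dotv_le v :
  \int[P]_(x in G) (dotv v (Z x) ^+ 2 * \1_S x) <= dotv v v * pr P S.
Proof.
have mS := measurable_sector w ws.
have mindic : measurable_fun setT (\1_S : T -> R) by exact: measurable_indic.
have sqr_dotv_le x : G x -> dotv v (Z x) ^+ 2 <= dotv v v.
  by move=> Gx; have := dotv_cauchy_schwarz v (Z x); rewrite ZG // mulr1.
rewrite -Rintegral_indicG // -RintegralZl //; last first.
  by apply: (integrable_bounded 1) => // x _; rewrite ger0_norm.
apply: le_Rintegral => // [||x Gx]; last exact: ler_wpM2r (sqr_dotv_le x Gx).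
  apply: (integrable_bounded (dotv v v)) => [|x Gx].
    by apply: measurable_funM => //; exact/measurable_funX/measurable_dotv.
  rewrite normrM !ger0_norm ?sqr_ge0 // -[leRHS]mulr1.
  exact: ler_pM (sqr_ge0 _) (indic_ge0 x) (sqr_dotv_le x Gx) (indic_le1 x).
apply: (integrable_bounded (dotv v v)) => [|x _]; first exact: measurable_funM.
by rewrite normrM !ger0_norm ?dotv_ge0 // ler_piMr ?dotv_ge0.
Qed.

Lemma eigenvalue_Amat_le a : eigenvalue (Amat P Z w ws) a -> a <= pr P S.
Proof.
case/eigenvalueP => v vA v0; have vv0 : 0 < dotv v v by rewrite dotv_gt0.
rewrite -(ler_pM2l vv0) mulrC -dotvZl -vA dotv_mulmx_Amat.
exact: Rintegral_sqr_dotv_le.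
Qed.

End SectorMatrix.

End RotationInvariance.

Theorem theorem7 (R : realType) (d : measure_display) (T : measurableType d)
  (P : probability T R) (p : nat) (Z : T -> 'rV[R]_p) (ws : 'rV[R]_p) :
  (forall i : 'I_p, measurable_fun setT (fun x => Z x 0 i)) ->
  rot_invariant P Z ->
  {ae P, forall x, vnorm (Z x) = 1} ->
  ws != 0 ->
  forall phi : R, 0 <= phi <= pi / 2 ->
  forall w : 'rV[R]_p, w != 0 -> vangle w ws <= phi ->
  forall a : R, eigenvalue (Amat P Z w ws) a -> a <= phi.
Proof.
move=> Zmeas Zrot [N [mN PN NZ]] ws0 phi _ w w0 angle_le a eig.
have PNC : P (~` ~` N) = 0 by rewrite setCK.
have ZG x : (~` N) x -> dotv (Z x) (Z x) = 1.
  move=> Nx; rewrite -sqr_vnorm (_ : vnorm (Z x) = 1) ?expr1n //.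
  by apply: contrapT => Zx1; exact: Nx (NZ x Zx1).
apply: le_trans (eigenvalue_Amat_le Zmeas (measurableC mN) PNC ZG _ _ _ eig) _.
apply: le_trans angle_le.
have [vangle_itv cos_vangle] := vangle_def w ws w0 ws0.
have [wV0 wsV0] : 0 < (vnorm w)^-1 /\ 0 < (vnorm ws)^-1 by rewrite !invr_gt0 !vnorm_gt0.
rewrite -(sectorZ _ _ _ _ wV0 wsV0).
apply: (pr_sector_le_angle Zmeas Zrot (measurableC mN) PNC ZG) => //; exact: dotv_unitv.
Qed.
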